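(* Let $(\Omega,\mathcal{F},\mathbb{P})$ be a probability space with a filtration $\{\mathcal{F}_n\}_{n=0}^\infty$, let $U$ be a stopping time with respect to $\{\mathcal{F}_n\}_{n=0}^\infty$, and let $\{X_n\}_{n=0}^\infty$ be a martingale (resp. supermartingale) adapted to $\{\mathcal{F}_n\}_{n=0}^\infty$. Put $Y=X_U$. Suppose there exist real numbers $M,c_1,c_2,d>0$ such that (i) for all sufficiently large $n\in\mathbb{N}$, $\mathbb{P}(U>n)\le c_1\cdot e^{-c_2\cdot n}$, and (ii) for all $n\in\mathbb{N}$, $|X_{n+1}-X_n|\le M\cdot n^d$ almost surely. Then $\mathbb{E}(|Y|)<\infty$ and $\mathbb{E}(Y)=\mathbb{E}(X_0)$ (resp. $\mathbb{E}(Y)\le\mathbb{E}(X_0)$).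
   Context: A stopping time with respect to $\{\mathcal{F}_n\}$ is a random variable $U:\Omega\to\mathbb{N}\cup\{0,\infty\}$ with $\{U\le n\}\in\mathcal{F}_n$ for all $n$. A process $\{X_n\}$ adapted to $\{\mathcal{F}_n\}$ is a martingale (resp. supermartingale) if $\mathbb{E}(|X_n|)<\infty$ for all $n$ and $\mathbb{E}(X_{n+1}\mid\mathcal{F}_n)=X_n$ (resp. $\le X_n$) almost surely. $X_U$ denotes the random variable $\omega\mapsto X_{U(\omega)}(\omega)$ (well defined almost surely, since condition (i) implies $U<\infty$ a.s.). *)

From HB Require Import structures.
From mathcomp Require Import all_boot all_order all_algebra.
From mathcomp Require Import all_classical all_reals all_analysis.
Set Implicit Arguments. Unset Strict Implicit. Unset Printing Implicit Defensive.
Import Order.TTheory GRing.Theory Num.Theory.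
Local Open Scope classical_set_scope.
Local Open Scope ring_scope.

Section defs.
Context {d : measure_display} {T : measurableType d} {R : realType}.

Definition filtration (F : nat -> set (set T)) : Prop :=
  (forall n, sigma_algebra setT (F n)) /\
  (forall n A, F n A -> measurable A) /\
  (forall n A, F n A -> F n.+1 A).

(** Values in N u {0, oo}: [Some k] is k, [None] is oo. *)
Definition stopping_time (F : nat -> set (set T)) (U : T -> option nat) : Prop :=
  forall n, F n [set w | exists2 k, U w = Some k & (k <= n)%N].

Definition U_gt (U : T -> option nat) (n : nat) : set T :=
  [set w | match U w with Some k => (n < k)%N | None => True end].

Definition measurable_wrt (G : set (set T)) (f : T -> R) : Prop :=
  forall B : set R, measurable B -> G (f @^-1` B).

Definition adapted (F : nat -> set (set T)) (X : nat -> T -> R) : Prop :=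
  forall n, measurable_wrt (F n) (X n).

(** Martingale: adapted, integrable, and E(X_{n+1} | F_n) = X_n a.s., stated
    through the defining property of conditional expectation:
    for every A in F_n, E(X_{n+1} 1_A) = E(X_n 1_A). *)
Definition martingale (P : probability T R) (F : nat -> set (set T))
  (X : nat -> T -> R) : Prop :=
  adapted F X /\ (forall n, P.-integrable setT (EFin \o X n)) /\
  (forall n A, F n A ->
     (\int[P]_(w in A) (X n.+1 w)%:E = \int[P]_(w in A) (X n w)%:E)%E).

Definition supermartingale (P : probability T R) (F : nat -> set (set T))
  (X : nat -> T -> R) : Prop :=
  adapted F X /\ (forall n, P.-integrable setT (EFin \o X n)) /\
  (forall n A, F n A ->
     (\int[P]_(w in A) (X n.+1 w)%:E <= \int[P]_(w in A) (X n w)%:E)%E).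

(** X_U, defined (arbitrarily as 0) on the null set {U = oo}. *)
Definition stopped_value (X : nat -> T -> R) (U : T -> option nat) : T -> R :=
  fun w => match U w with Some k => X k w | None => 0 end.

End defs.

From HB Require Import structures.
From mathcomp Require Import all_boot all_order all_algebra.
From mathcomp Require Import all_classical all_reals all_analysis.
From mathcomp Require Import measurable_realfun.
From mathcomp Require Import ring lra.
Import Order.TTheory GRing.Theory Num.Theory.
Import numFieldNormedType.Exports.
Local Open Scope classical_set_scope.
Local Open Scope ring_scope.

(* The stopped process Y_n = X_(min U n) starts at X_0 and moves by
   1_(U > n) (X_(n+1) - X_n); since (U > n) is in F_n, (super)martingality
   gives E Y_n = E X_0 (resp. <=) for every n.  The polynomial bound on the
   increments and the exponential tail of U make E |1_(U > n) (X_(n+1) - X_n)|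
   <= M n^e P(U > n) decay geometrically, so |X_0| + sum_n |increment_n| is an
   integrable dominating function; as Y_n -> X_U off the null set (U = oo),
   dominated convergence passes to the limit. *)

Lemma nneseries_geometric_lty {R : realType} {a q : R} :
  0 <= a -> 0 < q -> q < 1 -> (\sum_(k <oo) (a * q ^+ k)%:E < +oo)%E.
Proof.
move=> a0 q0 q1; apply: (@le_lt_trans _ _ (a * (1 - q)^-1)%:E); last exact: ltry.
apply: lime_le.
  by apply: is_cvg_nneseries => n _ _; rewrite lee_fin mulr_ge0 // exprn_ge0 // ltW.
apply: nearW => n; rewrite sumEFin lee_fin.
by have := @geometric_le_lim R n a q a0 q0; rewrite gtr0_norm //; apply.
Qed.

Lemma powR_le_expR {R : realType} (e c : R) : 0 < e -> 0 < c ->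
  exists2 C : R, 0 < C & forall x, 0 < x -> x `^ e <= C * expR (c * x).
Proof.
move=> e0 c0; pose s := c / e; have s0 : 0 < s by rewrite divr_gt0.
exists (expR (- (e * ln s))) => [|x x0]; first exact: expR_gt0.
rewrite /powR (negbTE (lt0r_neq0 x0)) -expRD ler_expR.
have : ln (s * x) < s * x by apply: ln_sublinear; rewrite mulr_gt0.
rewrite lnM ?posrE // => /ltW /(ler_wpM2l (ltW e0)).
rewrite mulrDr /s mulrA mulrCA divff ?lt0r_neq0 // mulr1 => h.
by rewrite mulrC; lra.
Qed.

Section optional_stopping.
Context {d : measure_display} {T : measurableType d} {R : realType}.
Context {P : probability T R} {F : nat -> set (set T)} {U : T -> option nat}.
Hypotheses (hF : filtration F) (hU : stopping_time F U).

Let U_le n := [set w | exists2 k, U w = Some k & (k <= n)%N].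

Lemma U_gt_setTD n : U_gt U n = setT `\` U_le n.
Proof.
apply/seteqP; split => w; rewrite /U_gt /U_le /=.
  case: (U w) => [k|] Uk; split => // -[k' //] [<-].
  by rewrite leqNgt Uk.
case: (U w) => [k|] [_ Hk] //; rewrite ltnNge; apply/negP => kn.
by apply: Hk; exists k.
Qed.

Lemma F_U_gt n : F n (U_gt U n).
Proof. by rewrite U_gt_setTD; have [/(_ n) [_ FC _] _] := hF; apply: FC. Qed.

Lemma measurable_U_gt n : measurable (U_gt U n).
Proof. by have [_ [mF _]] := hF; apply: mF (F_U_gt n). Qed.

Lemma measurable_U_le n : measurable (U_le n).
Proof. by have [_ [mF _]] := hF; apply: mF (hU n). Qed.

Let U_infinite := [set w | U w = None].

Lemma measurable_U_infinite : measurable U_infinite.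
Proof.
rewrite (_ : U_infinite = \bigcap_n U_gt U n).
  by apply: bigcapT_measurable => n; exact: measurable_U_gt.
apply/seteqP; split => w; rewrite /U_infinite /U_gt /=; first by move=> Uw n _; rewrite /= Uw.
by case E: (U w) => [k|] // /(_ k I); rewrite /= E ltnn.
Qed.

Lemma tail_bound_everywhere {c1 c2 : R} {N : nat} : 0 < c1 -> 0 < c2 ->
  (forall n, (N <= n)%N -> (P (U_gt U n) <= (c1 * expR (- (c2 * n%:R)))%:E)%E) ->
  exists2 c : R, 0 < c &
    forall n, (P (U_gt U n) <= (c * expR (- (c2 * n%:R)))%:E)%E.
Proof.
move=> c10 c20 tail; exists ((c1 + 1) * expR (c2 * N%:R)).
  by rewrite mulr_gt0 ?expR_gt0 // addr_gt0.
move=> n; case: (leqP N n) => Nn.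
  apply: (le_trans (tail n Nn)); rewrite lee_fin ler_pM2r ?expR_gt0 //.
  rewrite -[leLHS]mulr1 ler_pM ?(ltW c10) ?lerDl //.
  by apply: le_trans (expR_ge1Dx _); rewrite lerDl mulr_ge0 // ltW.
apply: (le_trans (probability_le1 _ (measurable_U_gt n))).
rewrite lee_fin -mulrA -expRD -[leLHS]mul1r ler_pM ?lerDr ?ltW //.
by rewrite expR_gt1 subr_gt0 ltr_pM2l // ltr_nat.
Qed.

Lemma U_infinite_null {c c2 : R} : 0 < c2 ->
  (forall n, (P (U_gt U n) <= (c * expR (- (c2 * n%:R)))%:E)%E) ->
  P U_infinite = 0%E.
Proof.
move=> c20 tail; apply/le_anti; rewrite measure_ge0 andbT.
apply/lee_addgt0Pr => eps eps0; rewrite add0e.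
pose n := (Num.truncn (c / (c2 * eps))).+1.
have sub : (P U_infinite <= P (U_gt U n))%E.
  apply: le_measure; rewrite ?inE; [exact: measurable_U_infinite|exact: measurable_U_gt|].
  by move=> w; rewrite /U_infinite /U_gt /= => ->.
apply: le_trans sub (le_trans (tail n) _); rewrite lee_fin expRN ler_pdivrMr ?expR_gt0 //.
have : c / (c2 * eps) < n%:R by apply: truncnS_gt.
rewrite ltr_pdivrMr ?mulr_gt0 // => /ltW/le_trans; apply.
have -> : n%:R * (c2 * eps) = c2 * n%:R * eps by ring.
rewrite [eps * _]mulrC ler_pM2r //.
by apply: le_trans (expR_ge1Dx _); rewrite lerDr.
Qed.

Definition stopped_process (X : nat -> T -> R) n w :=
  match U w with Some k => X (minn k n) w | None => X n w end.

Definition stopped_increment (X : nat -> T -> R) n : T -> R :=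
  patch (fun=> 0) (U_gt U n) (fun w => X n.+1 w - X n w).

Section stopped_process_pointwise.
Variable X : nat -> T -> R.

Lemma stopped_process0 w : stopped_process X 0 w = X 0%N w.
Proof. by rewrite /stopped_process; case: (U w) => // k; rewrite minn0. Qed.

Lemma stopped_processS n w :
  stopped_process X n.+1 w = stopped_process X n w + stopped_increment X n w.
Proof.
rewrite /stopped_increment /patch /stopped_process.
case: ifPn => [/set_mem|/negP Un]; case E: (U w) => [k|]; rewrite /U_gt /= ?E.
- by move=> nk; rewrite (minn_idPr (ltnW nk)) (minn_idPr nk) addrC subrK.
- by rewrite addrC subrK.
- have kn : (k <= n)%N.
    by rewrite leqNgt; apply/negP => nk; apply: Un; rewrite inE /U_gt /= E.
  by rewrite (minn_idPl kn) (minn_idPl (leqW kn)) addr0.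
- by exfalso; apply: Un; rewrite inE /U_gt /= E.
Qed.

Lemma stopped_process_stopped_value {n k w} : U w = Some k -> (k <= n)%N ->
  stopped_process X n w = stopped_value X U w.
Proof. by rewrite /stopped_process /stopped_value => -> /minn_idPl ->. Qed.

Lemma norm_stopped_process_le n w :
  `|stopped_process X n w| <= `|X 0%N w| + \sum_(0 <= k < n) `|stopped_increment X k w|.
Proof.
elim: n => [|n IH]; first by rewrite stopped_process0 big_geq // addr0.
rewrite stopped_processS big_nat_recr //= addrA.
by apply: le_trans (ler_normD _ _) _; rewrite lerD2r.
Qed.

End stopped_process_pointwise.

Section stopped_process_integrable.
Context {X : nat -> T -> R}.
Hypothesis iX : forall n, P.-integrable setT (EFin \o X n).

Lemma integrable_stopped_increment n :
  P.-integrable setT (EFin \o stopped_increment X n).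
Proof.
rewrite (_ : _ \o _ = ((EFin \o X n.+1) \- (EFin \o X n))%E \_ (U_gt U n)); last first.
  by apply/funext => w; rewrite /stopped_increment /patch /=; case: ifP.
apply/(integrable_mkcond _ (measurable_U_gt n)).
by apply: integrableS (integrableB _ (iX _) (iX _)) => //; exact: measurable_U_gt.
Qed.

Lemma integrable_stopped_process n :
  P.-integrable setT (EFin \o stopped_process X n).
Proof.
elim: n => [|n IH].
  by rewrite (_ : _ \o _ = EFin \o X 0%N) //; apply/funext => w /=; rewrite stopped_process0.
rewrite (_ : _ \o _ = (EFin \o stopped_process X n) \+ (EFin \o stopped_increment X n))%E.
  exact: integrableD IH (integrable_stopped_increment n).
by apply/funext => w /=; rewrite stopped_processS.
Qed.

Lemma measurable_stopped_process n : measurable_fun setT (stopped_process X n).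
Proof. by apply/measurable_EFinP; exact: measurable_int (integrable_stopped_process n). Qed.

Lemma measurable_stopped_increment n : measurable_fun setT (stopped_increment X n).
Proof. by apply/measurable_EFinP; exact: measurable_int (integrable_stopped_increment n). Qed.

(* X_U is the pointwise limit of the measurable functions 1_(U <= m) Y_m. *)
Lemma measurable_stopped_value : measurable_fun setT (stopped_value X U).
Proof.
apply: (@measurable_fun_cvg _ _ _ _ (fun m => patch (fun=> 0) (U_le m) (stopped_process X m))).
  move=> m; apply/measurable_EFinP.
  rewrite (_ : _ \o _ = (EFin \o stopped_process X m) \_ (U_le m)); last first.
    by apply/funext => w; rewrite /patch /=; case: ifP.
  apply/(measurable_restrictT _ (measurable_U_le m)).
  exact: measurable_funS (measurable_int _ (integrable_stopped_process m)).
move=> w _; apply: cvg_near_cst; case E: (U w) => [k|].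
  exists k => // m /= km; rewrite /patch ifT ?inE; last by exists k.
  exact: (stopped_process_stopped_value X E km).
apply: nearW => m; rewrite /patch /stopped_value E.
by case: ifPn => // /set_mem [k]; rewrite E.
Qed.

Lemma integral_stopped_processS n :
  (\int[P]_w (stopped_process X n.+1 w)%:E = \int[P]_w (stopped_process X n w)%:E +
   (\int[P]_(w in U_gt U n) (X n.+1 w)%:E - \int[P]_(w in U_gt U n) (X n w)%:E))%E.
Proof.
have iXU k : P.-integrable (U_gt U n) (EFin \o X k).
  by apply: integrableS (iX k) => //; exact: measurable_U_gt.
under eq_integral do rewrite stopped_processS EFinD.
rewrite integralD_EFin //; [|exact: integrable_stopped_process|exact: integrable_stopped_increment].
rewrite -integralB_EFin ?iXU //; last exact: measurable_U_gt.
rewrite [in RHS]integral_mkcond; congr (_ + _)%E.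
by apply: eq_integral => w _; rewrite /stopped_increment /patch /=; case: ifP.
Qed.

Lemma integral_stopped_process_le :
  (forall n A, F n A ->
     (\int[P]_(w in A) (X n.+1 w)%:E <= \int[P]_(w in A) (X n w)%:E)%E) ->
  forall n, (\int[P]_w (stopped_process X n w)%:E <= \int[P]_w (X 0%N w)%:E)%E.
Proof.
move=> super; elim=> [|n IH].
  by under eq_integral do rewrite stopped_process0.
rewrite integral_stopped_processS; apply: le_trans IH.
by rewrite -[leRHS]adde0 leeD2l // sube_le0 super //; exact: F_U_gt.
Qed.

Lemma integral_stopped_process_eq :
  (forall n A, F n A ->
     (\int[P]_(w in A) (X n.+1 w)%:E = \int[P]_(w in A) (X n w)%:E)%E) ->
  forall n, (\int[P]_w (stopped_process X n w)%:E = \int[P]_w (X 0%N w)%:E)%E.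
Proof.
move=> mart; elim=> [|n IH].
  by under eq_integral do rewrite stopped_process0.
rewrite integral_stopped_processS mart ?subee ?adde0 //; last exact: F_U_gt.
apply: integrable_fin_num => //; first exact: measurable_U_gt.
by apply: integrableS (iX n) => //; exact: measurable_U_gt.
Qed.

Section dominated.
Context {M e c c2 : R}.
Hypotheses (M0 : 0 < M) (e0 : 0 < e) (c0 : 0 < c) (c20 : 0 < c2).
Hypothesis tail : forall n, (P (U_gt U n) <= (c * expR (- (c2 * n%:R)))%:E)%E.
Hypothesis increment_bound : forall n : nat, (0 < n)%N ->
  {ae P, forall w, `|X n.+1 w - X n w| <= M * n%:R `^ e}.

Let measurable_norm_stopped_increment k :
  measurable_fun setT (fun w => (`|stopped_increment X k w|)%:E).
Proof.
by apply/measurable_EFinP; apply: measurableT_comp => //; exact: measurable_stopped_increment.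
Qed.

Lemma integral_norm_stopped_increment_le k : (0 < k)%N ->
  (\int[P]_w (`|stopped_increment X k w|)%:E <=
   (M * k%:R `^ e * (c * expR (- (c2 * k%:R))))%:E)%E.
Proof.
move=> k0; have Mk0 : 0 <= M * k%:R `^ e by rewrite mulr_ge0 ?powR_ge0 // ltW.
apply: (@le_trans _ _ (\int[P]_w ((cst (M * k%:R `^ e)%:E) \_ (U_gt U k)) w)%E).
  apply: ae_ge0_le_integral => //.
  - by move=> w _; rewrite /patch; case: ifP; rewrite ?lee_fin.
  - exact/(measurable_restrictT _ (measurable_U_gt k)).
  have := increment_bound _ k0; apply: filterS => w Hw _.
  by rewrite /stopped_increment /patch; case: ifP; rewrite ?normr0 ?lee_fin.
rewrite -integral_mkcond integral_cst; last exact: measurable_U_gt.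
by rewrite [leRHS]EFinM; apply: lee_wpmul2l; [rewrite lee_fin|exact: tail].
Qed.

Lemma integral_norm_stopped_increment_geometric : exists a q : R,
  [/\ 0 <= a, 0 < q, q < 1 &
   forall k, (\int[P]_w (`|stopped_increment X k w|)%:E <= (a * q ^+ k)%:E)%E].
Proof.
have [C C0 powC] := powR_le_expR e (c2 / 2) e0 (divr_gt0 c20 (ltr0n _ 2)).
pose I0 := (\int[P]_w (`|stopped_increment X 0%N w|)%:E)%E.
have I0_ge0 : (0 <= I0)%E by apply: integral_ge0 => w _; rewrite lee_fin.
have I0_fin : I0 \is a fin_num.
  have /integrableP[_] := integrable_stopped_increment 0.
  by rewrite ge0_fin_numE.
have MCc0 : 0 <= M * C * c by rewrite !mulr_ge0 // ltW.
exists (fine I0 + M * C * c), (expR (- (c2 / 2))); split.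
- by rewrite addr_ge0 ?fine_ge0.
- exact: expR_gt0.
- by rewrite expR_lt1 oppr_lt0 divr_gt0.
case=> [|k]; first by rewrite -[leLHS]fineK // lee_fin expr0 mulr1 lerDl.
apply: (le_trans (integral_norm_stopped_increment_le _ (ltn0Sn k))); rewrite lee_fin.
(* k^e <= C e^(c2 k / 2) turns the bound into M C c (e^(-c2/2))^k. *)
have -> : expR (- (c2 / 2)) ^+ k.+1 =
    expR (c2 / 2 * k.+1%:R) * expR (- (c2 * k.+1%:R)).
  by rewrite -expRD -expRM_natr; congr expR; field.
set E := expR (- (c2 * k.+1%:R)); have E0 : 0 < E by exact: expR_gt0.
apply: (@le_trans _ _ ((M * c * E) * (C * expR (c2 / 2 * k.+1%:R)))).
  rewrite [leLHS](_ : _ = (M * c * E) * k.+1%:R `^ e); last by ring.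
  by rewrite ler_pM2l ?mulr_gt0 // powC ?ltr0n.
rewrite [leLHS](_ : _ = M * C * c * (expR (c2 / 2 * k.+1%:R) * E)); last by ring.
by rewrite ler_pM2r ?mulr_gt0 ?expR_gt0 // lerDr fine_ge0.
Qed.

Definition stopped_dominator w :=
  ((`|X 0%N w|)%:E + \sum_(k <oo) (`|stopped_increment X k w|)%:E)%E.

Lemma norm_stopped_process_le_dominator n w :
  ((`|stopped_process X n w|)%:E <= stopped_dominator w)%E.
Proof.
apply: le_trans (_ : _ <= (`|X 0%N w| + \sum_(0 <= k < n) `|stopped_increment X k w|)%:E)%E _.
  by rewrite lee_fin norm_stopped_process_le.
rewrite /stopped_dominator EFinD leeD2l // -sumEFin.
by apply: nneseries_lim_ge => k _ _; rewrite lee_fin.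
Qed.

Lemma integrable_stopped_dominator : P.-integrable setT stopped_dominator.
Proof.
have mX0 : measurable_fun setT (fun w => (`|X 0%N w|)%:E).
  apply/measurable_EFinP; apply: measurableT_comp => //.
  by apply/measurable_EFinP; exact: measurable_int (iX 0).
have msum : measurable_fun setT (fun w => \sum_(k <oo) (`|stopped_increment X k w|)%:E)%E.
  exact: (@ge0_emeasurable_sum _ _ _ _ (fun k w => (`|stopped_increment X k w|)%:E) xpredT).
have sum0 w : (0 <= \sum_(k <oo) (`|stopped_increment X k w|)%:E)%E.
  by apply: nneseries_ge0 => k _ _; rewrite lee_fin.
apply/integrableP; split; first exact: emeasurable_funD.
under eq_integral do rewrite gee0_abs ?adde_ge0 ?lee_fin //.
rewrite ge0_integralD //; apply: lte_add_pinfty; first by have /integrableP[] := iX 0.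
rewrite integral_nneseries //.
have [a [q [a0 q0 q1 geo]]] := integral_norm_stopped_increment_geometric.
apply: le_lt_trans (nneseries_geometric_lty a0 q0 q1).
by apply: lee_nneseries => [k _ _|k _]; [apply: integral_ge0 => w _; rewrite lee_fin|exact: geo].
Qed.

Lemma stopped_value_integrable_cvg :
  P.-integrable setT (EFin \o stopped_value X U) /\
  (\int[P]_w (stopped_process X n w)%:E @[n --> \oo] -->
   \int[P]_w (stopped_value X U w)%:E)%E.
Proof.
have [] // := @dominated_convergence _ _ _ P setT measurableT
  (fun n => EFin \o stopped_process X n) (EFin \o stopped_value X U) stopped_dominator.
- by move=> n; apply/measurable_EFinP; exact: measurable_stopped_process.
- by apply/measurable_EFinP; exact: measurable_stopped_value.
- exists U_infinite; split; [exact: measurable_U_infinite|exact: U_infinite_null tail|].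
  move=> w /= not_cvg; rewrite /U_infinite /=; case E: (U w) => [k|] //.
  exfalso; apply: not_cvg => _; apply: cvg_near_cst; exists k => // m /= km.
  by rewrite (stopped_process_stopped_value X E km).
- exact: integrable_stopped_dominator.
- by apply: nearW => w n _; exact: norm_stopped_process_le_dominator.
Qed.

End dominated.
End stopped_process_integrable.
End optional_stopping.

Theorem theorem5p2 (d : measure_display) (T : measurableType d) (R : realType)
  (P : probability T R) (F : nat -> set (set T)) (U : T -> option nat)
  (M c1 c2 e : R) :
  filtration F -> stopping_time F U ->
  0 < M -> 0 < c1 -> 0 < c2 -> 0 < e ->
  (exists N : nat, forall n : nat, (N <= n)%N ->
     (P (U_gt U n) <= (c1 * expR (- (c2 * n%:R)))%:E)%E) ->
  (forall X : nat -> T -> R,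
     martingale P F X ->
     (forall n : nat, (0 < n)%N ->
        {ae P, forall w, `|X n.+1 w - X n w| <= M * n%:R `^ e}) ->
     P.-integrable setT (EFin \o stopped_value X U) /\
     (\int[P]_w (stopped_value X U w)%:E = \int[P]_w (X 0%N w)%:E)%E) /\
  (forall X : nat -> T -> R,
     supermartingale P F X ->
     (forall n : nat, (0 < n)%N ->
        {ae P, forall w, `|X n.+1 w - X n w| <= M * n%:R `^ e}) ->
     P.-integrable setT (EFin \o stopped_value X U) /\
     (\int[P]_w (stopped_value X U w)%:E <= \int[P]_w (X 0%N w)%:E)%E).
Proof.
move=> hF hU M0 c10 c20 e0 [N tailN].
have [c c0 tail] := tail_bound_everywhere hF hU c10 c20 tailN.
split=> X [_ [iX hX]] incr.
- have [iY cvgY] := stopped_value_integrable_cvg hF hU iX M0 e0 c0 c20 tail incr.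
  split => //; rewrite -(cvg_lim _ cvgY) //.
  under eq_fun do rewrite (integral_stopped_process_eq hF hU iX hX).
  exact: lim_cst.
- have [iY cvgY] := stopped_value_integrable_cvg hF hU iX M0 e0 c0 c20 tail incr.
  split => //; rewrite -(cvg_lim _ cvgY) //; apply: lime_le; first by apply/cvgP: cvgY.
  by apply: nearW => n; exact (integral_stopped_process_le hF hU iX hX n).
Qed.
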